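(* Let $\varphi(\bm x,\bm y,\bm z)=\bigwedge_{i=1}^n \bm r_i^\top\bm x<\bm s_i^\top\bm y+\bm t_i^\top\bm z+h_i\wedge\bigwedge_{j=1}^m\bm u_j^\top\bm x=\bm v_j^\top\bm y+\bm w_j^\top\bm z+d_j$ as in the context, and let $\bm c\in\mathbb{R}^e$. Then $\exists^{\mathsf{ram}}\bm x,\bm y\colon\varphi(\bm x,\bm y,\bm c)$ holds over $\mathbb{R}$ if and only if there exists a $\bm c$-admissible profile $\bm p$ and a sequence compatible with $\bm p$ that satisfies the equality constraints for $\bm c$.
   Context: Here $\bm x,\bm y$ range over $\mathbb{R}^d$ and $\bm z$ over $\mathbb{R}^e$; $\bm r_i,\bm s_i,\bm u_j,\bm v_j\in\mathbb{Q}^d$, $\bm t_i,\bm w_j\in\mathbb{Q}^e$, $h_i,d_j\in\mathbb{Q}$. A profile is a tuple $\bm p=(\rho,\sigma,t_\rho,t_\sigma)$ of functions $\rho,\sigma\colon\{1,\dots,n\}\to\mathbb{R}\cup\{-\omega,\omega\}$ and $t_\rho,t_\sigma\colon\{1,\dots,n\}\to\{-\omega,-1,0,1,\omega\}$. For a sequence $(\bm a_k)_{k\ge1}$ in $\mathbb{R}^d$ let $\bm\rho_i=(\bm r_i^\top\bm a_k)_{k\ge1}$ and $\bm\sigma_i=(\bm s_i^\top\bm a_k)_{k\ge1}$. A sequence of pairwise distinct vectors is compatible with $\bm p$ if for every $i$ the following hold for $\bm\rho_i$ with respect to $(\rho(i),t_\rho(i))$, and likewise for $\bm\sigma_i$ with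 respect to $(\sigma(i),t_\sigma(i))$: type $0$ means the sequence is constantly equal to the value; type $1$ (resp. $-1$) means it is strictly increasing (resp. strictly decreasing) and converges from below (resp. above) to the real value; type $\omega$ (resp. $-\omega$) means it is strictly increasing and diverges to $\infty$ (resp. strictly decreasing and diverges to $-\infty$) and the value is $\omega$ (resp. $-\omega$). A profile is $\bm c$-admissible if for all $i$: (a) $\sigma(i)\neq-\omega$, and if $\rho(i)=\omega$ then $\sigma(i)=\omega$; (b) $\rho(i)<\sigma(i)+\bm t_i^\top\bm c+h_i$ whenever ($t_\rho(i)\in\{-1,0\}$ and $t_\sigma(i)\in\{0,1\}$) or ($t_\rho(i)=t_\sigma(i)=-1$); (c) $\rho(i)\le\sigma(i)+\bm t_i^\top\bm c+h_i$ whenever ($t_\rho(i)=0$ and $t_\sigma(i)=-1$) or $t_\rho(i)=1$. A sequence $(\bm a_k)$ satisfies the equality constraints for $\bm c$ if $\bm u_j^\top\bm a_k=\bm v_j^\top\bm a_\ell+\bm w_j^\top\bm c+d_j$ for all $j$ and all $k<\ell$. Ramsey quantifier: $\exists^{\mathsf{ram}}\bm x,\bm y\colon\varphi(\bm x,\bm y,\bm c)$ holds iff there is an infinite sequence of pairwise distinct $\bm a_i\in\mathbb{R}^d$ with $\varphi(\bm a_i,\bm a_j,\bm c)$ for all $i<j$. *)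

From HB Require Import structures.
From mathcomp Require Import all_boot all_order all_algebra.
From mathcomp Require Import all_classical all_reals all_analysis.
Set Implicit Arguments. Unset Strict Implicit. Unset Printing Implicit Defensive.
Import Order.TTheory GRing.Theory Num.Theory.
Import numFieldNormedType.Exports.
Local Open Scope classical_set_scope.
Local Open Scope ring_scope.

Definition dotq {R : realType} {d : nat} (r : 'cV[rat]_d) (x : 'cV[R]_d) : R :=
  \sum_(k < d) ratr (r k 0) * x k 0.

Definition phi {R : realType} {d e n m : nat}
  (r s : 'I_n -> 'cV[rat]_d) (t : 'I_n -> 'cV[rat]_e) (h : 'I_n -> rat)
  (u v : 'I_m -> 'cV[rat]_d) (w : 'I_m -> 'cV[rat]_e) (dd : 'I_m -> rat)
  (x y : 'cV[R]_d) (c : 'cV[R]_e) : Prop :=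
  (forall i, dotq (r i) x < dotq (s i) y + dotq (t i) c + ratr (h i)) /\
  (forall j, dotq (u j) x = dotq (v j) y + dotq (w j) c + ratr (dd j)).

Definition ramsey {R : realType} {d e : nat}
  (P : 'cV[R]_d -> 'cV[R]_d -> 'cV[R]_e -> Prop) (c : 'cV[R]_e) : Prop :=
  exists a : nat -> 'cV[R]_d, injective a /\
    forall i j : nat, (i < j)%N -> P (a i) (a j) c.

Inductive ptype := TNegOmega | TMinus1 | TZero | TPlus1 | TOmega.

(* values in R u {-omega, omega} are extended reals, -omega = -oo, omega = +oo *)
Record profile (R : realType) (n : nat) := Profile {
  rho : 'I_n -> \bar R;
  sigma : 'I_n -> \bar R;
  t_rho : 'I_n -> ptype;
  t_sigma : 'I_n -> ptype }.

Definition seq_compat {R : realType} (sq : nat -> R) (val : \bar R) (ty : ptype)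
  : Prop :=
  match ty with
  | TZero => exists l : R, val = l%:E /\ forall k, sq k = l
  | TPlus1 => exists l : R, val = l%:E /\ (forall k, sq k < sq k.+1) /\
                sq @ \oo --> l
  | TMinus1 => exists l : R, val = l%:E /\ (forall k, sq k.+1 < sq k) /\
                sq @ \oo --> l
  | TOmega => val = +oo%E /\ (forall k, sq k < sq k.+1) /\ sq @ \oo --> +oo
  | TNegOmega => val = -oo%E /\ (forall k, sq k.+1 < sq k) /\ sq @ \oo --> -oo
  end.

Definition compatible {R : realType} {d n : nat}
  (r s : 'I_n -> 'cV[rat]_d) (p : profile R n) (a : nat -> 'cV[R]_d) : Prop :=
  injective a /\
  forall i : 'I_n,
    seq_compat (fun k => dotq (r i) (a k)) (rho p i) (t_rho p i) /\
    seq_compat (fun k => dotq (s i) (a k)) (sigma p i) (t_sigma p i).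

Definition admissible {R : realType} {e n : nat}
  (t : 'I_n -> 'cV[rat]_e) (h : 'I_n -> rat) (c : 'cV[R]_e) (p : profile R n)
  : Prop :=
  forall i : 'I_n,
    let bound := (sigma p i + (dotq (t i) c + ratr (h i))%:E)%E in
    (sigma p i <> -oo%E /\ (rho p i = +oo%E -> sigma p i = +oo%E)) /\
    (((t_rho p i = TMinus1 \/ t_rho p i = TZero) /\
      (t_sigma p i = TZero \/ t_sigma p i = TPlus1)) \/
     (t_rho p i = TMinus1 /\ t_sigma p i = TMinus1) ->
     (rho p i < bound)%E) /\
    ((t_rho p i = TZero /\ t_sigma p i = TMinus1) \/ t_rho p i = TPlus1 ->
     (rho p i <= bound)%E).

Definition eq_constraints {R : realType} {d e m : nat}
  (u v : 'I_m -> 'cV[rat]_d) (w : 'I_m -> 'cV[rat]_e) (dd : 'I_m -> rat)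
  (c : 'cV[R]_e) (a : nat -> 'cV[R]_d) : Prop :=
  forall (j : 'I_m) (k l : nat), (k < l)%N ->
    dotq (u j) (a k) = dotq (v j) (a l) + dotq (w j) c + ratr (dd j).

From mathcomp Require Import all_boot all_order all_algebra.
From mathcomp Require Import all_classical all_reals all_analysis.
Import Order.TTheory GRing.Theory Num.Theory.
Import numFieldNormedType.Exports.
Local Open Scope classical_set_scope.
Local Open Scope ring_scope.
Set Implicit Arguments. Unset Strict Implicit.
Set Bullet Behavior "Strict Subproofs".

(* Both directions go through the property that, for every i, the inequality
   r_i.a_k < s_i.a_l + t_i.c + h_i holds for all large l as soon as k is large.
   For sequences compatible with a profile this property is equivalent to
   c-admissibility: it compares the limits rho(i) and sigma(i) + t_i.c + h_i
   and, when they coincide, the sides from which they are approached.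
   A Ramsey sequence has the property and, by the monotone subsequence theorem
   applied to its finitely many coordinate sequences, a subsequence compatible
   with some profile.  Conversely, a diagonal extraction turns the property
   into the inequality for all k < l along a subsequence; equality constraints
   and compatibility pass to subsequences. *)

Section index_sequences.
Implicit Types g : nat -> nat.

Lemma increasing_seq_lt g : increasing_seq g -> {mono g : i j / (i < j)%N}.
Proof. exact: leqW_mono. Qed.

Lemma increasing_seq_ge g : increasing_seq g -> forall k, (k <= g k)%N.
Proof.
move=> /increasing_seq_lt g_lt; elim=> // k IH.
by apply: leq_ltn_trans IH _; rewrite g_lt.
Qed.

Lemma increasing_seq_cvgy g : increasing_seq g -> g @ \oo --> \oo.
Proof.
move=> g_incr; apply/cvgnyPge => A; near=> k.
apply: leq_trans (increasing_seq_ge g_incr k); near: k; exact: nbhs_infty_ge.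
Unshelve. all: by end_near. Qed.

Lemma increasing_seq_comp g g' :
  increasing_seq g -> increasing_seq g' -> increasing_seq (g \o g').
Proof. by move=> g_incr g'_incr i j /=; rewrite g_incr; exact: g'_incr. Qed.

Lemma increasing_chain (P : nat -> nat -> Prop) k0 :
  (forall k, exists l, (k < l)%N /\ P k l) ->
  exists g, [/\ increasing_seq g, g 0%N = k0 & forall j, P (g j) (g j.+1)].
Proof.
move=> /choice [F FP]; exists (fun j => iter j F k0); split=> // [|j].
  by apply/increasing_seqP => j; exact: (FP _).1.
exact: (FP _).2.
Qed.

Lemma near_near_of_pairwise (Q : nat -> nat -> Prop) :
  (forall k l, (k < l)%N -> Q k l) ->
  \forall k \near \oo, \forall l \near \oo, Q k l.
Proof.
move=> Q_lt; near=> k; near=> l; apply: Q_lt; near: l; exact: nbhs_infty_gt.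
Unshelve. all: by end_near. Qed.

Lemma near_near_forall (I : finType) (Q : I -> nat -> nat -> Prop) :
  (forall i, \forall k \near \oo, \forall l \near \oo, Q i k l) ->
  \forall k \near \oo, \forall l \near \oo, forall i, Q i k l.
Proof. by move=> /filter_forall; apply: filterS => k; exact: filter_forall. Qed.

(* Each new index is taken beyond the thresholds attached to all the indices
   chosen before it. *)
Lemma near_near_subseq (Q : nat -> nat -> Prop) :
  (\forall k \near \oo, \forall l \near \oo, Q k l) ->
  exists2 g, increasing_seq g & forall i j, (i < j)%N -> Q (g i) (g j).
Proof.
move=> [K _ QK].
pose P k l := forall k', (K <= k' <= k)%N -> forall l', (l <= l')%N -> Q k' l'.
have P_ex k : exists l, (k < l)%N /\ P k l.
  have : \forall l \near \oo, forall k' : 'I_k.+1, (K <= k')%N -> Q k' l.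
    apply: filter_forall => k'; have [Kk'|_] := leqP K k'; last exact: nearW.
    by apply: filterS (QK _ Kk') => l Ql.
  move=> [N _ QN]; exists (maxn N k.+1); split; first exact: leq_maxr.
  move=> k' /andP [Kk' k'k] l' Nl'; have k'_lt : (k' < k.+1)%N by [].
  apply: (QN l' _ (Ordinal k'_lt)) => //=.
  by rewrite (leq_trans (leq_maxl N k.+1)).
have [g [g_incr g0 gP]] := @increasing_chain P K P_ex.
exists g => // i [//|j] ij.
by apply: (gP j) => //; rewrite -g0 -!leEnat !g_incr.
Qed.

End index_sequences.

Section compatible_sequences.
Variable R : realType.
Implicit Types (f : nat -> R) (v w : \bar R).
Local Open Scope ereal_scope.

Lemma homo_lt_step f :
  (forall k, f k < f k.+1)%R -> {homo f : i j / (i < j)%N >-> (i < j)%R}.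
Proof. by move=> f_lt; apply: homo_ltn => // y x z; exact: lt_trans. Qed.

Lemma homo_gt_step f :
  (forall k, f k.+1 < f k)%R -> {homo f : i j / (i < j)%N >-> (j < i)%R}.
Proof.
by move=> f_gt; apply: homo_ltn => // y x z xy yz; exact: lt_trans yz xy.
Qed.

Lemma seq_compat_subseq f v ty (g : nat -> nat) : increasing_seq g ->
  seq_compat f v ty -> seq_compat (f \o g) v ty.
Proof.
move=> g_incr; have g_cvg := increasing_seq_cvgy g_incr.
have g_lt k : (g k < g k.+1)%N by rewrite (increasing_seq_lt g_incr).
case: ty => /=.
- move=> [-> [/homo_gt_step f_gt f_cvg]]; split=> //; split.
    by move=> k; exact: f_gt (g_lt k).
  exact: cvg_comp g_cvg f_cvg.
- move=> [l [-> [/homo_gt_step f_gt f_cvg]]]; exists l; split=> //; split.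
    by move=> k; exact: f_gt (g_lt k).
  exact: cvg_comp g_cvg f_cvg.
- by move=> [l [-> f_cst]]; exists l.
- move=> [l [-> [/homo_lt_step f_lt f_cvg]]]; exists l; split=> //; split.
    by move=> k; exact: f_lt (g_lt k).
  exact: cvg_comp g_cvg f_cvg.
- move=> [-> [/homo_lt_step f_lt f_cvg]]; split=> //; split.
    by move=> k; exact: f_lt (g_lt k).
  exact: cvg_comp g_cvg f_cvg.
Qed.

Lemma seq_compat_addr (g : nat -> R) v ty (B : R) :
  seq_compat g v ty -> seq_compat (fun l => g l + B)%R (v + B%:E) ty.
Proof.
case: ty => /=.
- move=> [-> [g_gt /cvgrNyPlt g_cvg]]; split=> //; split.
    by move=> k; rewrite ltrD2r.
  apply/cvgrNyPlt => A.
  by apply: filterS (g_cvg (A - B)%R) => k; rewrite ltrBrDr.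
- move=> [l [-> [g_gt g_cvg]]]; exists (l + B)%R; split=> //; split.
    by move=> k; rewrite ltrD2r.
  exact: cvgD g_cvg (cvg_cst B).
- by move=> [l [-> g_cst]]; exists (l + B)%R; split=> // k; rewrite g_cst.
- move=> [l [-> [g_lt g_cvg]]]; exists (l + B)%R; split=> //; split.
    by move=> k; rewrite ltrD2r.
  exact: cvgD g_cvg (cvg_cst B).
- move=> [-> [g_lt /cvgryPgt g_cvg]]; split=> //; split.
    by move=> k; rewrite ltrD2r.
  apply/cvgryPgt => A.
  by apply: filterS (g_cvg (A - B)%R) => k; rewrite ltrBlDr.
Qed.

Lemma seq_compat_cvg_gt f v ty (x : R) :
  seq_compat f v ty -> x%:E < v -> \forall k \near \oo, (x < f k)%R.
Proof.
case: ty => /=.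
- by move=> [->].
- by move=> [l [-> [_ f_cvg]]]; rewrite lte_fin; exact: cvgr_gt.
- move=> [l [-> f_cst]]; rewrite lte_fin => xl.
  by apply: nearW => k; rewrite f_cst.
- by move=> [l [-> [_ f_cvg]]]; rewrite lte_fin; exact: cvgr_gt.
- by move=> [-> [_ /cvgryPgt f_cvg]] _; exact: f_cvg.
Qed.

Lemma seq_compat_cvg_lt f v ty (x : R) :
  seq_compat f v ty -> v < x%:E -> \forall k \near \oo, (f k < x)%R.
Proof.
case: ty => /=.
- by move=> [-> [_ /cvgrNyPlt f_cvg]] _; exact: f_cvg.
- by move=> [l [-> [_ f_cvg]]]; rewrite lte_fin; exact: cvgr_lt.
- move=> [l [-> f_cst]]; rewrite lte_fin => lx.
  by apply: nearW => k; rewrite f_cst.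
- by move=> [l [-> [_ f_cvg]]]; rewrite lte_fin; exact: cvgr_lt.
- by move=> [->].
Qed.

Section bounds.
Variables (f : nat -> R) (v : \bar R) (ty : ptype).
Hypothesis f_compat : seq_compat f v ty.

Lemma seq_compat_near_gt w : w < v -> \forall k \near \oo, w < (f k)%:E.
Proof.
case: w => [x||] wv; last by apply: nearW => k; exact: ltNyr.
- by apply: filterS (seq_compat_cvg_gt f_compat wv) => k; rewrite lte_fin.
- by move: wv; rewrite ltNge leey.
Qed.

Lemma seq_compat_near_lt w : v < w -> \forall k \near \oo, (f k)%:E < w.
Proof.
case: w => [x||] vw.
- by apply: filterS (seq_compat_cvg_lt f_compat vw) => k; rewrite lte_fin.
- by apply: nearW => k; rewrite ltry.
- by move: vw; rewrite ltNge leNye.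
Qed.

Lemma seq_compat_le_of_near w : (\forall k \near \oo, (f k)%:E <= w) -> v <= w.
Proof.
move=> fw; rewrite leNgt; apply/negP => /seq_compat_near_gt wf.
have [k [/le_lt_trans fwf /fwf]] := filter_ex (filterI fw wf).
by rewrite ltxx.
Qed.

Lemma seq_compat_ge_of_near w : (\forall k \near \oo, w <= (f k)%:E) -> w <= v.
Proof.
move=> fw; rewrite leNgt; apply/negP => /seq_compat_near_lt fw'.
have [k [/le_lt_trans wfw /wfw]] := filter_ex (filterI fw fw').
by rewrite ltxx.
Qed.

End bounds.

Lemma seq_compat_lt_value f v : seq_compat f v TPlus1 ->
  forall k, (f k)%:E < v.
Proof.
move=> f_compat k; have [_ [_ [/homo_lt_step f_lt _]]] := f_compat.
rewrite (@lt_le_trans _ _ (f k.+1)%:E) ?lte_fin ?f_lt //.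
apply: (seq_compat_ge_of_near f_compat); near=> j; rewrite lee_fin.
apply: (ltW_homo f_lt); near: j; exact: nbhs_infty_ge.
Unshelve. all: by end_near. Qed.

Lemma seq_compat_value_lt f v : seq_compat f v TMinus1 ->
  forall k, v < (f k)%:E.
Proof.
move=> f_compat k; have [_ [_ [/homo_gt_step f_gt _]]] := f_compat.
rewrite (@le_lt_trans _ _ (f k.+1)%:E) ?lte_fin ?f_gt //.
apply: (seq_compat_le_of_near f_compat); near=> j; rewrite lee_fin.
have : (k.+1 <= j)%N by near: j; exact: nbhs_infty_ge.
by rewrite leq_eqVlt => /predU1P [-> //| /f_gt/ltW].
Unshelve. all: by end_near. Qed.

Lemma seq_compat_value_le f v ty : seq_compat f v ty ->
  ty = TMinus1 \/ ty = TZero -> forall k, v <= (f k)%:E.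
Proof.
move=> + [|] ty_e k; rewrite ty_e.
- by move/seq_compat_value_lt/(_ k)/ltW.
- by move=> /= [l [-> f_cst]]; rewrite f_cst.
Qed.

Lemma seq_compat_le_value f v ty : seq_compat f v ty ->
  ty = TZero \/ ty = TPlus1 -> forall k, (f k)%:E <= v.
Proof.
move=> + [|] ty_e k; rewrite ty_e.
- by move=> /= [l [-> f_cst]]; rewrite f_cst.
- by move/seq_compat_lt_value/(_ k)/ltW.
Qed.

Lemma seq_compat_of_lt_step f :
  (forall k, f k < f k.+1)%R -> exists v ty, seq_compat f v ty.
Proof.
move=> f_lt; have f_nd : nondecreasing_seq f.
  by apply/nondecreasing_seqP => k; exact: ltW.
have [f_cvg|f_dvg] := pselect (cvgn f).
- by exists (limn f)%:E, TPlus1, (limn f).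
- by exists +oo, TOmega; do !split=> //; exact: nondecreasing_dvgn_lt.
Qed.

Lemma seq_compat_of_gt_step f :
  (forall k, f k.+1 < f k)%R -> exists v ty, seq_compat f v ty.
Proof.
move=> f_gt; have [f_cvg|f_dvg] := pselect (cvgn f).
- by exists (limn f)%:E, TMinus1, (limn f).
- exists -oo, TNegOmega; do !split=> //; apply/cvgNry.
  apply: nondecreasing_dvgn_lt; last by rewrite is_cvgNE.
  by rewrite nondecreasing_opp; apply/nonincreasing_seqP => k; exact: ltW.
Qed.

Lemma nondecreasing_subseq_compat f : (forall k, f k <= f k.+1)%R ->
  exists2 g, increasing_seq g & exists v ty, seq_compat (f \o g) v ty.
Proof.
move=> f_le; have f_homo : {homo f : i j / (i <= j)%N >-> (i <= j)%R}.
  by apply: homo_leq => // y x z; exact: le_trans.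
have [[K fK]|f_ncst] :=
  pselect (exists K, forall j, (K <= j)%N -> f j = f K).
  exists (addn K); first by move=> i j; exact: leq_add2l.
  by exists (f K)%:E, TZero, (f K); split=> // j; apply: fK; exact: leq_addr.
have f_lt k : exists l, (k < l)%N /\ (f k < f l)%R.
  move/forallNP: f_ncst => /(_ k) /existsNP [l /not_implyP [kl fl]].
  exists l; rewrite ltn_neqAle lt_neqAle kl f_homo // !andbT.
  by split; apply/eqP => lk; apply: fl; rewrite lk.
have [g [g_incr _ gP]] := @increasing_chain _ 0%N f_lt.
by exists g => //; exact: seq_compat_of_lt_step.
Qed.

(* Either infinitely many indices k are peaks (f l < f k for all l > k), which
   gives a decreasing subsequence, or beyond the last peak every f k is
   dominated by some later term, which gives a nondecreasing one. *)
Lemma seq_compat_subseq_exists f :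
  exists2 g, increasing_seq g & exists v ty, seq_compat (f \o g) v ty.
Proof.
pose peak k := forall l, (k < l)%N -> (f l < f k)%R.
have [peaks|] := pselect (forall k, exists l, (k < l)%N /\ peak l).
  have [p0 [_ p0_peak]] := peaks 0%N.
  have [g [g_incr g0 gP]] := @increasing_chain (fun _ l => peak l) p0 peaks.
  have g_peak j : peak (g j) by case: j => [|j]; [rewrite g0 | exact: gP].
  exists g => //; apply: seq_compat_of_gt_step => k.
  by apply: g_peak; rewrite (increasing_seq_lt g_incr).
move=> /existsNP [N N_nopeak].
have f_up k : exists l, (k < l)%N /\ ((N < k)%N -> (f k <= f l)%R).
  have [Nk|kN] := ltnP N k; last first.
    by exists k.+1; split=> // Nk; move: kN; rewrite leqNgt Nk.
  have : ~ peak k by move=> kpeak; apply: N_nopeak; exists k.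
  move=> /existsNP [l /not_implyP [kl fl]]; exists l; split=> // _.
  by rewrite leNgt; exact/negP.
have [g [g_incr g0 gP]] := @increasing_chain _ N.+1 f_up.
have Ng j : (N < g j)%N by rewrite -g0 -leEnat g_incr.
have [g' g'_incr g'_compat] :=
  @nondecreasing_subseq_compat (f \o g) (fun j => gP j (Ng j)).
by exists (g \o g'); first exact: increasing_seq_comp.
Qed.

Lemma seq_compat_common_subseq (I : finType) (F : I -> nat -> R) :
  exists2 g, increasing_seq g &
    forall i, exists v ty, seq_compat (F i \o g) v ty.
Proof.
suff [g g_incr gP] : exists2 g, increasing_seq g &
    forall i, i \in enum I -> exists v ty, seq_compat (F i \o g) v ty.
  by exists g => // i; apply: gP; rewrite mem_enum.
elim: (enum I) => [|j s [g g_incr gP]]; first by exists id.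
have [g' g'_incr [v [ty g'_compat]]] := seq_compat_subseq_exists (F j \o g).
exists (g \o g'); first exact: increasing_seq_comp.
move=> i; rewrite in_cons => /predU1P [-> | /gP [v' [ty' compat']]].
  by exists v, ty.
by exists v', ty'; exact: (seq_compat_subseq g'_incr compat').
Qed.

End compatible_sequences.

Section admissible_pairs.
Variable R : realType.
Local Open Scope ereal_scope.

(* Conditions (a)-(c) of c-admissibility for one index, with vg standing for
   the bound sigma(i) + t_i.c + h_i rather than for sigma(i). *)
Definition pair_admissible (vf : \bar R) tf (vg : \bar R) tg : Prop :=
  (vg <> -oo /\ (vf = +oo -> vg = +oo)) /\
  (((tf = TMinus1 \/ tf = TZero) /\ (tg = TZero \/ tg = TPlus1)) \/
     (tf = TMinus1 /\ tg = TMinus1) -> vf < vg) /\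
  ((tf = TZero /\ tg = TMinus1) \/ tf = TPlus1 -> vf <= vg).

Lemma admissibleP e n (t : 'I_n -> 'cV[rat]_e) (h : 'I_n -> rat)
    (c : 'cV[R]_e) (p : profile R n) :
  admissible t h c p <-> forall i, pair_admissible (rho p i) (t_rho p i)
    (sigma p i + (dotq (t i) c + ratr (h i))%:E) (t_sigma p i).
Proof.
split=> adm i; move: (adm i); rewrite /pair_admissible /=.
all: case: (sigma p i) => [x||] //=; rewrite -EFinD.
all: by move=> [[_ rho_oo] bc]; split=> //; split=> // /rho_oo.
Qed.

Section compatible_pair.
Variables (f g : nat -> R) (vf vg : \bar R) (tf tg : ptype).
Hypotheses (f_compat : seq_compat f vf tf) (g_compat : seq_compat g vg tg).

(* When vf < vg fails, admissibility leaves two possibilities: f approaches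
   vf = vg from below (or both are +oo), or f is constant and g approaches
   vg from above. *)
Lemma pair_admissible_cases : pair_admissible vf tf vg tg ->
  (\forall k \near \oo, (f k)%:E < vg) \/ (forall k l, (f k < g l)%R).
Proof.
move=> [[vg_Ny vf_y] [strict weak]].
have [vf_lt|vg_le] := ltP vf vg.
  by left; exact: (seq_compat_near_lt f_compat).
have not_strict : ~ vf < vg by rewrite ltNge vg_le.
case: tf f_compat strict weak vf_y vg_le not_strict
  => /= [[-> _]|[x [-> _]]|[x [-> f_cst]]|f_up|[-> _]] strict weak vf_y vg_le
    not_strict.
- by move: vg_le; rewrite leeNy_eq => /eqP.
- case: tg g_compat strict weak => /= [[vg_e _]|_|_|_|[vg_e _]] strict weak.
  1: by case: vg_Ny.
  4: by move: vg_le; rewrite vg_e leye_eq.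
  all: by exfalso; apply: not_strict; apply: strict; intuition.
- case: tg g_compat strict weak
    => /= [[vg_e _]|g_down|_|_|[vg_e _]] strict weak.
  1: by case: vg_Ny.
  4: by move: vg_le; rewrite vg_e leye_eq.
  2,3: by exfalso; apply: not_strict; apply: strict; intuition.
  have x_le : x%:E <= vg by apply: weak; left.
  right=> k l; rewrite -lte_fin f_cst (le_lt_trans x_le) //.
  exact: (seq_compat_value_lt g_down).
- left; apply: nearW => k.
  rewrite (lt_le_trans (seq_compat_lt_value f_up k)) //.
  by apply: weak; right.
- by left; rewrite (vf_y erefl); apply: nearW => k; rewrite ltry.
Qed.

Lemma near_near_of_pair_admissible : pair_admissible vf tf vg tg ->
  \forall k \near \oo, \forall l \near \oo, (f k < g l)%R.
Proof.
case/pair_admissible_cases => [f_below|f_lt].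
- apply: filterS f_below => k /(seq_compat_near_gt g_compat).
  by apply: filterS => l; rewrite lte_fin.
- by apply: nearW => k; apply: nearW => l; exact: f_lt.
Qed.

Lemma pair_admissible_of_near_near :
  (\forall k \near \oo, \forall l \near \oo, (f k < g l)%R) ->
  pair_admissible vf tf vg tg.
Proof.
move=> fg.
have f_le : \forall k \near \oo, (f k)%:E <= vg.
  apply: filterS fg => k fkg; apply: (seq_compat_ge_of_near g_compat).
  by apply: filterS fkg => l /ltW; rewrite lee_fin.
have vf_le : vf <= vg := seq_compat_le_of_near f_compat f_le.
have vg_Ny : vg <> -oo.
  by move=> vg_Ny; have [k] := filter_ex f_le; rewrite vg_Ny leeNy_eq.
have vf_y : vf = +oo -> vg = +oo.
  by move=> vf_y; apply/eqP; rewrite -leye_eq -vf_y.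
split=> //; split=> [types|_ //].
rewrite lt_neqAle vf_le andbT; apply/eqP => vf_vg.
have [k fkg] := filter_ex fg.
case: types => [[tf_down tg_up] | [tf_M1 _]].
- have [l fgl] := filter_ex fkg.
  have := seq_compat_value_le f_compat tf_down k.
  rewrite vf_vg => /(le_trans (seq_compat_le_value g_compat tg_up l)).
  by rewrite lee_fin leNgt fgl.
- have f_down : seq_compat f vf TMinus1 by rewrite -tf_M1.
  have := seq_compat_value_lt f_down k; rewrite vf_vg.
  move=> /(seq_compat_near_lt g_compat) gf.
  have [l [fgl]] := filter_ex (filterI fkg gf).
  by rewrite lte_fin ltNge (ltW fgl).
Qed.

Lemma pair_admissible_near : pair_admissible vf tf vg tg <->
  \forall k \near \oo, \forall l \near \oo, (f k < g l)%R.
Proof.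
split; [exact: near_near_of_pair_admissible |
        exact: pair_admissible_of_near_near].
Qed.

End compatible_pair.

End admissible_pairs.

Theorem mainTheorem11 (R : realType) (d e n m : nat)
  (r s : 'I_n -> 'cV[rat]_d) (t : 'I_n -> 'cV[rat]_e) (h : 'I_n -> rat)
  (u v : 'I_m -> 'cV[rat]_d) (w : 'I_m -> 'cV[rat]_e) (dd : 'I_m -> rat)
  (c : 'cV[R]_e) :
  ramsey (phi r s t h u v w dd) c <->
  exists p : profile R n, admissible t h c p /\
    exists a : nat -> 'cV[R]_d, compatible r s p a /\ eq_constraints u v w dd c a.
Proof.
split.
- move=> [a [a_inj a_phi]].
  pose F (x : 'I_n * bool) k :=
    if x.2 then dotq (r x.1) (a k) else dotq (s x.1) (a k).
  have [g g_incr F_compat] := seq_compat_common_subseq F.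
  have g_lt k l : (k < l)%N -> (g k < g l)%N.
    by rewrite (increasing_seq_lt g_incr).
  have /choice [V V_compat] x : exists vt, seq_compat (F x \o g) vt.1 vt.2.
    by have [v' [ty' compat']] := F_compat x; exists (v', ty').
  exists (Profile (fun i => (V (i, true)).1) (fun i => (V (i, false)).1)
                  (fun i => (V (i, true)).2) (fun i => (V (i, false)).2)).
  split.
  + apply/admissibleP => i /=.
    apply/(pair_admissible_near (V_compat (i, true))
                                (seq_compat_addr _ (V_compat (i, false)))).
    apply: near_near_of_pairwise => k l /g_lt/a_phi [a_lt _].
    by rewrite /F /= addrA.
  + exists (a \o g); split; first split.
    * exact: inj_comp a_inj (increasing_seq_injective g_incr).
    * by move=> i; split; [exact: (V_compat (i, true)) |
                           exact: (V_compat (i, false))].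
    * by move=> j k l /g_lt/a_phi [_ a_eq].
- move=> [p [/admissibleP p_adm [a [[a_inj a_compat] a_eq]]]].
  have ineqs : \forall k \near \oo, \forall l \near \oo, forall i,
      dotq (r i) (a k) < dotq (s i) (a l) + (dotq (t i) c + ratr (h i)).
    apply: near_near_forall => i; have [ri si] := a_compat i.
    exact/(pair_admissible_near ri (seq_compat_addr _ si)).
  have [g g_incr g_ineqs] := near_near_subseq ineqs.
  exists (a \o g); split=> [|k l kl].
    exact: inj_comp a_inj (increasing_seq_injective g_incr).
  split=> [i|j]; first by rewrite -addrA; exact: g_ineqs.
  by apply: a_eq; rewrite (increasing_seq_lt g_incr).
Qed.
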